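(* Let $(C,\mathfrak p,\mathfrak d)$ be a regular $q$-magma coalgebra. For all $1\le i\le n-1$ we have $\mathfrak p_{i1}^i=i\,\mathfrak p_{11}^1(\mathfrak p_{10}^1)^{i-1}$ and $\mathfrak d_{i1}^i=i\,\mathfrak d_{11}^1(\mathfrak d_{10}^1)^{i-1}$.
   Context: $K$ is an algebraically closed field of characteristic $0$ and $n\ge2$. $C$ is the coalgebra dual to $K[y]/\langle y^n\rangle$: basis $x_0,\dots,x_{n-1}$, $\Delta(x_i)=\sum_{j+k=i}x_j\otimes x_k$, $\epsilon(x_i)=\delta_{i0}$; $C\otimes C$ has the tensor product coalgebra structure; Sweedler notation $\Delta(b)=b_{(1)}\otimes b_{(2)}$. For linear maps $\mathfrak p,\mathfrak d\colon C\otimes C\to C$ write $a\cdot b=\mathfrak p(a\otimes b)$, $a:b=\mathfrak d(a\otimes b)$, $\mathfrak p(x_i\otimes x_j)=\sum_{k=0}^{n-1}\mathfrak p_{ij}^kx_k$, $\mathfrak d(x_i\otimes x_j)=\sum_{k=0}^{n-1}\mathfrak d_{ij}^kx_k$. A triple $(C,\mathfrak p,\mathfrak d)$ with $\mathfrak p,\mathfrak d$ coalgebra morphisms is a regular $q$-magma coalgebra if there are coalgebra morphisms $a\otimes b\mapsto a^b$, $a\otimes b\mapsto a_b$ from $C\otimes C$ to $C$ with $a^{b_{(1)}}\cdot b_{(2)}=(a\cdot b_{(1)})^{b_{(2)}}=\epsilon(b)a$ and $(a:b_{(2)})_{b_{(1)}}=a_{b_{(2)}}:b_{(1)}=\epsilon(b)a$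 for all $a,b\in C$. *)

From mathcomp Require Import all_boot all_order all_algebra.
Set Implicit Arguments. Unset Strict Implicit. Unset Printing Implicit Defensive.
Import GRing.Theory.
Local Open Scope ring_scope.

(* A linear map C (x) C -> C, where C has basis x_0..x_{n-1}, is encoded by its
   structure constants  f(x_i (x) x_j) = \sum_k F i j k x_k  (only i,j,k < n matter). *)
Definition sconst (K : Type) := nat -> nat -> nat -> K.

(* F is a coalgebra morphism C (x) C -> C, where
   Delta(x_i) = \sum_{a+b=i} x_a (x) x_b, eps(x_i) = delta_{i0},
   and C (x) C carries the tensor product coalgebra structure. *)
Definition coalg_morph (K : nzRingType) (n : nat) (F : sconst K) : Prop :=
  (forall i j, (i < n)%N -> (j < n)%N ->
     F i j 0%N = ((i == 0%N) && (j == 0%N))%:R) /\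
  (forall i j k l, (i < n)%N -> (j < n)%N -> (k < n)%N -> (l < n)%N ->
     (if (k + l < n)%N then F i j (k + l)%N else 0) =
     \sum_(a < i.+1) \sum_(c < j.+1) F a c k * F (i - a)%N (j - c)%N l).

(* (C, p, d) is a regular q-magma coalgebra: p, d are coalgebra morphisms and
   there exist coalgebra morphisms U (a (x) b |-> a^b), V (a (x) b |-> a_b) with
   a^{b(1)} . b(2) = (a . b(1))^{b(2)} = eps(b) a and
   (a : b(2))_{b(1)} = a_{b(2)} : b(1) = eps(b) a,
   checked on basis elements a = x_i, b = x_j, coefficient of x_m. *)
Definition regular_qmagma (K : nzRingType) (n : nat) (P D : sconst K) : Prop :=
  coalg_morph n P /\ coalg_morph n D /\
  exists U V : sconst K,
    coalg_morph n U /\ coalg_morph n V /\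
    (forall i j m, (i < n)%N -> (j < n)%N -> (m < n)%N ->
       [/\ \sum_(c < j.+1) \sum_(k < n) U i c k * P k (j - c)%N m
             = ((j == 0%N) && (i == m))%:R,
           \sum_(c < j.+1) \sum_(k < n) P i c k * U k (j - c)%N m
             = ((j == 0%N) && (i == m))%:R,
           \sum_(c < j.+1) \sum_(k < n) D i (j - c)%N k * V k c m
             = ((j == 0%N) && (i == m))%:R &
           \sum_(c < j.+1) \sum_(k < n) V i (j - c)%N k * D k c m
             = ((j == 0%N) && (i == m))%:R]).

From mathcomp Require Import all_boot all_order all_algebra.
From mathcomp Require Import zify ring.
Set Implicit Arguments.
Unset Strict Implicit.
Unset Printing Implicit Defensive.
Import GRing.Theory.
Local Open Scope ring_scope.

(* Let F be p or d, alpha = F_10^1, beta = F_01^1 and gamma = F_11^1.  Since F is a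
   coalgebra morphism, the x_1 (x) x_k components of Delta(F(x_i (x) x_j)) and of
   (F (x) F)(Delta(x_i (x) x_j)) agree, which expresses F_ij^(k+1) through the F_ac^1
   and the F_..^k; also F_ij^k = 0 for k > i + j.  In the top degree this recursion
   gives F_i0^i = alpha^i and F_i1^(i+1) = (i+1) alpha^i beta, while for k = n-1 the
   left side is 0 because y^n = 0, so n alpha^(n-1) beta = 0.  Regularity makes alpha
   invertible, hence beta = 0 in characteristic 0, and one degree below the top the
   recursion then reads F_(i+1)1^(i+1) = alpha F_i1^i + gamma alpha^i. *)

Lemma sum_ord_trunc (V : nmodType) (N m : nat) (f : nat -> V) : (m <= N)%N ->
  (forall a, (m <= a)%N -> (a < N)%N -> f a = 0) ->
  \sum_(a < N) f a = \sum_(a < m) f a.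
Proof.
move=> le_mN f0; rewrite -!(big_mkord xpredT) (big_cat_nat (leq0n m) le_mN) /=.
rewrite [X in _ + X]big_nat_cond [X in _ + X]big1 ?addr0 // => a /andP[/andP[ma aN] _].
exact: f0.
Qed.

Section CoalgebraMorphism.
Variables (K : idomainType) (n : nat) (F : sconst K).
Hypotheses (hF : coalg_morph n F) (n_gt1 : (1 < n)%N).

(* The x_1 (x) x_k component of (F (x) F)(Delta(x_i (x) x_j)). *)
Definition comul1_coef (i j k : nat) : K :=
  \sum_(a < i.+1) \sum_(c < j.+1) F a c 1%N * F (i - a)%N (j - c)%N k.

Local Notation alpha := (F 1%N 0%N 1%N).
Local Notation beta := (F 0%N 1%N 1%N).
Local Notation gamma := (F 1%N 1%N 1%N).

Lemma coef0 i j : (i < n)%N -> (j < n)%N ->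
  F i j 0 = ((i == 0%N) && (j == 0%N))%:R.
Proof. exact: hF.1. Qed.

Lemma coef_succ i j k : (i < n)%N -> (j < n)%N -> (k.+1 < n)%N ->
  F i j k.+1 = comul1_coef i j k.
Proof.
move=> ni nj nk; have := hF.2 i j 1 k ni nj n_gt1 (ltnW nk).
by rewrite add1n nk.
Qed.

Lemma comul1_coef_top i j : (i < n)%N -> (j < n)%N -> comul1_coef i j n.-1 = 0.
Proof.
move=> ni nj; have := hF.2 i j 1 n.-1 ni nj n_gt1 ltac:(lia).
by rewrite ifF //; lia.
Qed.

(* x_0 (x) x_0 is grouplike, so F_00^m = (F_00^1)^m, and (F_00^1)^n = 0. *)
Lemma coef001 : F 0%N 0%N 1%N = 0.
Proof.
have F00_exp m : (m < n)%N -> F 0%N 0%N m = F 0%N 0%N 1%N ^+ m.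
  elim: m => [|m IH] nm; first by rewrite coef0 //; lia.
  rewrite coef_succ //; [|lia..].
  by rewrite /comul1_coef !big_ord1 IH ?exprS //; lia.
have := @comul1_coef_top 0 0 (ltnW n_gt1) (ltnW n_gt1).
rewrite /comul1_coef !big_ord1 /= subn0 (F00_exp n.-1); last lia.
by rewrite -exprS => /eqP; rewrite expf_eq0 => /andP[_ /eqP].
Qed.

Lemma coef_eq0 i j k : (i < n)%N -> (j < n)%N -> (k < n)%N -> (i + j < k)%N ->
  F i j k = 0.
Proof.
elim: k i j => [|k IH] i j ni nj nk // ijk.
rewrite coef_succ //; [|lia..].
rewrite /comul1_coef big1 // => a _; rewrite big1 // => c _.
have [/andP[/eqP a0 /eqP c0]|ac] := boolP ((a == 0 :> nat) && (c == 0 :> nat)).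
  by rewrite a0 c0 coef001 mul0r.
by rewrite IH ?mulr0 //; have := ltn_ord a; have := ltn_ord c; lia.
Qed.

Lemma comul1_coef0 i k m : (i < n)%N -> (k < n)%N ->
  (m <= i.+1)%N -> (i < m + k)%N ->
  comul1_coef i 0%N k = \sum_(a < m) F a 0%N 1%N * F (i - a)%N 0%N k.
Proof.
move=> ni nk mi imk; rewrite /comul1_coef.
under eq_bigr => a _ do rewrite big_ord1 /= subn0.
apply: (@sum_ord_trunc _ _ m (fun a => F a 0%N 1%N * F (i - a)%N 0%N k)) => // a ma ai.
by rewrite (@coef_eq0 _ _ k) ?mulr0 //; lia.
Qed.

Lemma comul1_coef1 i k m : (i < n)%N -> (k < n)%N ->
  (m <= i.+1)%N -> (i.+1 < m + k)%N ->
  comul1_coef i 1%N k =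
    \sum_(a < m) (F a 0%N 1%N * F (i - a)%N 1%N k + F a 1%N 1%N * F (i - a)%N 0%N k).
Proof.
move=> ni nk mi imk; rewrite /comul1_coef.
under eq_bigr => a _ do rewrite !big_ord_recr big_ord0 /= add0r subn0 subnn.
apply: (@sum_ord_trunc _ _ m (fun a =>
  F a 0%N 1%N * F (i - a)%N 1%N k + F a 1%N 1%N * F (i - a)%N 0%N k)) => // a ma ai.
by rewrite !(@coef_eq0 _ _ k) ?mulr0 ?addr0 //; lia.
Qed.

Lemma coef_diag0 i : (i < n)%N -> F i 0%N i = alpha ^+ i.
Proof.
elim: i => [|i IH] ni; first by rewrite coef0.
rewrite coef_succ //; [|lia..].
rewrite (@comul1_coef0 _ _ 2) //; [|lia..].
rewrite !big_ord_recr big_ord0 /= coef001 mul0r !add0r subSS subn0 IH ?exprS //.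
exact: ltnW.
Qed.

Lemma comul1_coef_diag1 i : (i < n)%N ->
  comul1_coef i 1%N i = i.+1%:R * alpha ^+ i * beta.
Proof.
elim: i => [|i IH] ni.
  rewrite /comul1_coef !big_ord1 !big_ord_recr big_ord0 /= coef001 !coef0 //; [|lia..].
  by rewrite !subnn !subn0 /= mul0r !add0r mulr1 mul1r expr0 mul1r.
rewrite (@comul1_coef1 _ _ 2) //; [|lia..].
rewrite !big_ord_recr big_ord0 /= coef001 mul0r !add0r subSS !subn0.
rewrite coef_diag0 //.
rewrite (@coef_eq0 i 0%N i.+1) //; [|lia..].
rewrite (@coef_succ i 1%N i) //; [|lia..].
rewrite IH; last lia.
by rewrite mulr0 addr0 exprS [_.+2%:R]mulrS; ring.
Qed.

Lemma coef_diag1 i : (i.+1 < n)%N -> F i 1%N i.+1 = i.+1%:R * alpha ^+ i * beta.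
Proof.
move=> ni; rewrite coef_succ //; [|lia..].
by rewrite comul1_coef_diag1 //; lia.
Qed.

Lemma coef011_eq0 : n%:R != 0 :> K -> alpha != 0 -> beta = 0.
Proof.
move=> n_neq0 alpha_neq0; have := @comul1_coef_diag1 n.-1 ltac:(lia).
rewrite comul1_coef_top ?prednK //; [|lia..].
move/esym/eqP; rewrite !mulf_eq0 expf_eq0 (negbTE n_neq0) (negbTE alpha_neq0).
by rewrite andbF => /eqP.
Qed.

Lemma coef_subdiag1 : beta = 0 ->
  forall i, (i.+1 < n)%N -> F i.+1 1%N i.+1 = i.+1%:R * gamma * alpha ^+ i.
Proof.
move=> beta0; elim=> [|i IH] ni; first by rewrite mul1r mulr1.
rewrite coef_succ //; [|lia..].
rewrite (@comul1_coef1 _ _ 3) //; [|lia..].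
rewrite !big_ord_recr big_ord0 /= coef001 beta0 !mul0r !add0r !subSS !subn0.
rewrite (@coef_diag0 i.+1); last lia.
rewrite (@coef_eq0 i 0%N i.+1) //; [|lia..].
rewrite (@coef_diag1 i) ?beta0; last lia.
rewrite IH; last lia.
by rewrite !exprS [_.+2%:R]mulrS; ring.
Qed.

Lemma coef101_neq0 (G : sconst K) :
  \sum_(k < n) F 1%N 0%N k * G k 0%N 1%N = 1 -> alpha != 0.
Proof.
rewrite (@sum_ord_trunc _ _ 2 (fun k => F 1%N 0%N k * G k 0%N 1%N)) //; last first.
  by move=> k k2 kn; rewrite coef_eq0 ?mul0r //; lia.
rewrite !big_ord_recr big_ord0 /= coef0 //; last lia.
rewrite mul0r !add0r => alphaG1. apply/eqP => alpha0; move: alphaG1.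
by rewrite alpha0 mul0r => /eqP; rewrite eq_sym oner_eq0.
Qed.

Lemma coef_i1i : n%:R != 0 :> K -> alpha != 0 ->
  forall i, (0 < i < n)%N -> F i 1%N i = i%:R * gamma * alpha ^+ (i - 1)%N.
Proof.
move=> n_neq0 alpha_neq0 [|i] // /andP[_ ni].
by rewrite subn1 coef_subdiag1 // coef011_eq0.
Qed.

End CoalgebraMorphism.

Theorem proposition1p15 (K : closedFieldType) (n : nat) (P D : sconst K) :
  [pchar K] =i pred0 -> (2 <= n)%N ->
  regular_qmagma n P D ->
  forall i : nat, (1 <= i)%N -> (i <= n - 1)%N ->
    P i 1%N i = i%:R * P 1%N 1%N 1%N * (P 1%N 0%N 1%N) ^+ (i - 1) /\
    D i 1%N i = i%:R * D 1%N 1%N 1%N * (D 1%N 0%N 1%N) ^+ (i - 1).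
Proof.
move=> charK0 n_gt1 [hP [hD [U [V [_ [_ hinv]]]]]] i i_gt0 i_lt.
have n_neq0 : n%:R != 0 :> K by rewrite (pcharf0P K).1 // -lt0n ltnW.
have [_ PU _ _] := hinv 1%N 0%N 1%N n_gt1 (ltnW n_gt1) n_gt1.
have [_ _ DV _] := hinv 1%N 0%N 1%N n_gt1 (ltnW n_gt1) n_gt1.
rewrite big_ord1 /= subn0 in PU; rewrite big_ord1 /= subn0 in DV.
have i_range : (0 < i < n)%N by lia.
have alphaP : P 1%N 0%N 1%N != 0 := coef101_neq0 hP n_gt1 PU.
have alphaD : D 1%N 0%N 1%N != 0 := coef101_neq0 hD n_gt1 DV.
split.
- exact: coef_i1i hP n_gt1 n_neq0 alphaP i i_range.
- exact: coef_i1i hD n_gt1 n_neq0 alphaD i i_range.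
Qed.
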